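(* Let $\tau$ be a distributive triangle function on $\Delta^+$, $\Sigma$ a ring of subsets of $\Omega\ne\emptyset$, $\gamma$ a $\tau$-decomposable measure on $\Sigma$, and $f,g$ simple functions with $f\le g$. Then $\int_E f\,d\gamma\ge\int_E g\,d\gamma$ for every $E\in\Sigma$.
   Context: $\Delta^+$: functions $F:[-\infty,+\infty]\to[0,1]$ non-decreasing, left-continuous on $\mathbb{R}$, $F(x)=0$ for $x\le0$, $F(+\infty)=1$, ordered pointwise; $\varepsilon_0(x)=1$ if $x>0$, else $0$. Triangle function: symmetric, associative $\tau:\Delta^+\times\Delta^+\to\Delta^+$, non-decreasing in each variable, identity $\varepsilon_0$; $G\oplus H=\tau(G,H)$, $\bigoplus_{k=1}^nG_k=\tau(G_1,\bigoplus_{k=2}^nG_k)$. $c\odot G=\varepsilon_0$ if $c=0$, $(c\odot G)(x)=G(x/c)$ if $c>0$; $\tau$ distributive if $c\odot(G\oplus H)=(c\odot G)\oplus(c\odot H)$ for all $c\ge0$. $\tau$-decomposable measure: $\gamma:\Sigma\to\Delta^+$ with $\gamma_\emptyset=\varepsilon_0$, $\gamma_{A\cup B}=\tau(\gamma_A,\gamma_B)$ for disjoint $A,B\in\Sigma$. A simple function is $f=\sum_{i=1}^nx_i\chi_{E_i}$ with $x_i\in[0,\infty)$ and $E_i\in\Sigma$ pairwise disjoint, and $\int_Ef\,d\gamma=\bigoplus_{i=1}^nx_i\odot\gamma_{E\cap E_i}$ (independent of the representation). *)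

From HB Require Import structures.
From mathcomp Require Import all_boot all_order all_algebra.
From mathcomp Require Import all_classical all_reals all_analysis.
Set Implicit Arguments. Unset Strict Implicit. Unset Printing Implicit Defensive.
Import Order.TTheory GRing.Theory Num.Theory.
Import numFieldNormedType.Exports.
Local Open Scope classical_set_scope.
Local Open Scope ring_scope.

Section Defs.
Variable R : realType.

Definition dfun := \bar R -> R.

Definition inDelta (F : dfun) : Prop :=
  [/\ (forall x, 0 <= F x <= 1),
      (forall x y : \bar R, (x <= y)%E -> F x <= F y),
      (forall x : R, (fun y : R => F y%:E) @ x^'- --> F x%:E),
      (forall x : \bar R, (x <= 0)%E -> F x = 0)
    & F +oo%E = 1].

Definition dle (F G : dfun) : Prop := forall x : \bar R, F x <= G x.

Definition eps0 : dfun := fun x => if (0 < x)%E then 1 else 0.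

Definition dscale (c : R) (G : dfun) : dfun :=
  if c == 0 then eps0 else fun x => G (x * (c^-1)%:E)%E.

Definition is_triangle_function (tau : dfun -> dfun -> dfun) : Prop :=
  [/\ (forall G H, inDelta G -> inDelta H -> inDelta (tau G H)),
      (forall G H, inDelta G -> inDelta H -> tau G H = tau H G),
      (forall G H K, inDelta G -> inDelta H -> inDelta K ->
          tau G (tau H K) = tau (tau G H) K),
      ((forall G G' H, inDelta G -> inDelta G' -> inDelta H ->
          dle G G' -> dle (tau G H) (tau G' H)) /\
      (forall G H H', inDelta G -> inDelta H -> inDelta H' ->
          dle H H' -> dle (tau G H) (tau G H')))
    & (forall G, inDelta G -> tau G eps0 = G)].

Definition distributive_tf (tau : dfun -> dfun -> dfun) : Prop :=
  forall (c : R) G H, 0 <= c -> inDelta G -> inDelta H ->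
    dscale c (tau G H) = tau (dscale c G) (dscale c H).

Definition tau_decomposable {Omega : Type} (tau : dfun -> dfun -> dfun)
  (Sigma : set (set Omega)) (gamma : set Omega -> dfun) : Prop :=
  [/\ (forall A, Sigma A -> inDelta (gamma A)),
      gamma set0 = eps0
    & (forall A B, Sigma A -> Sigma B -> A `&` B = set0 ->
         gamma (A `|` B) = tau (gamma A) (gamma B))].

Definition simple_rep {Omega : Type} (Sigma : set (set Omega)) (n : nat)
  (x : 'I_n -> R) (E : 'I_n -> set Omega) (f : Omega -> R) : Prop :=
  [/\ (forall i, 0 <= x i),
      (forall i, Sigma (E i)),
      (forall i j, i != j -> E i `&` E j = set0)
    & (forall w, f w = \sum_(i < n) x i * \1_(E i) w)].

(* int_A f dgamma := (+)_{i} x_i ⊙ gamma_{A ∩ E_i}, n-ary (+) as a right fold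
   tau(G_1, tau(G_2, ... tau(G_n, eps0))) (eps0 is the identity of tau). *)
Definition simple_integral {Omega : Type} (tau : dfun -> dfun -> dfun)
  (gamma : set Omega -> dfun) (n : nat) (x : 'I_n -> R)
  (E : 'I_n -> set Omega) (A : set Omega) : dfun :=
  \big[tau/eps0]_(i < n) dscale (x i) (gamma (A `&` E i)).

End Defs.

From Pilot Require Import Defs.
From HB Require Import structures.
From mathcomp Require Import all_boot all_order all_algebra.
From mathcomp Require Import all_classical all_reals all_analysis.
Import Order.TTheory GRing.Theory Num.Theory.
Import numFieldNormedType.Exports.
(* Imported again so that [dscale] means [Defs.dscale], not [derive.dscale]. *)
Import Pilot.Defs.
Local Open Scope classical_set_scope.
Local Open Scope ring_scope.

(* Both integrals are tau-decomposable in the set variable, so it suffices to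
   compare them on the pieces [A `&` E_i] of [f] and on the rest of [A].
   On a piece where [f = x_i <= g], distributivity and the antitonicity of
   [c ⊙ G] in [c] give [∫ g <= x_i ⊙ γ <= ∫ f]; on the rest [f = 0], so [∫ f]
   is [eps0], the top element of Δ⁺. *)

Set Implicit Arguments.
Unset Strict Implicit.
Unset Printing Implicit Defensive.

Section distribution_functions.
Variable R : realType.
Implicit Types (F G H : dfun R) (c : R).

Lemma dle_refl F : dle F F.
Proof. by []. Qed.

Lemma dle_trans G F H : dle F G -> dle G H -> dle F H.
Proof. by move=> FG GH x; exact: le_trans (FG x) (GH x). Qed.

Lemma inDelta_eps0 : inDelta (@eps0 R).
Proof.
rewrite /eps0; split.
- by move=> x; case: ifP => _; rewrite ?lexx ?ler01.
- by move=> x y xy; case: ifP => [x0|]; rewrite ?(lt_le_trans x0 xy) //; case: ifP.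
- move=> x; apply: cvg_near_cst; have [x_le0|x_gt0] := leP x 0.
    near=> y; have y_le0 : y <= 0.
      by apply: le_trans x_le0; apply/ltW; near: y; exact: nbhs_left_lt.
    by rewrite !lte_fin !ltNge x_le0 y_le0.
  near=> y; have y_gt0 : 0 < y by near: y; exact: nbhs_left_gt.
  by rewrite !lte_fin x_gt0 y_gt0.
- by move=> x x_le0; rewrite ltNge x_le0.
- by rewrite ltry.
Unshelve. all: end_near. Qed.

Lemma dle_eps0 F : inDelta F -> dle F (@eps0 R).
Proof.
case=> F01 _ _ F_le0 _ x; rewrite /eps0; case: ifP => [_|x_gt0].
  by case/andP: (F01 x).
by rewrite F_le0 // leNgt x_gt0.
Qed.

Lemma dscale0 F : dscale 0 F = @eps0 R.
Proof. by rewrite /dscale eqxx. Qed.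

Lemma dscale_eps0 c : 0 <= c -> dscale c (@eps0 R) = @eps0 R.
Proof.
rewrite le_eqVlt => /predU1P[<-|c_gt0]; first exact: dscale0.
rewrite /dscale gt_eqF //; apply: funext => x.
by rewrite /eps0 pmule_lgt0 // lte_fin invr_gt0.
Qed.

Lemma inDelta_dscale c F : 0 <= c -> inDelta F -> inDelta (dscale c F).
Proof.
rewrite le_eqVlt => /predU1P[<-|c_gt0] FP; first by rewrite dscale0; exact: inDelta_eps0.
case: FP => F01 F_mono F_left F_le0 F_infty.
have cV_gt0 : (0 < (c^-1)%:E)%E by rewrite lte_fin invr_gt0.
rewrite /dscale gt_eqF //; split => //.
- by move=> x y xy; apply: F_mono; rewrite lee_pmul2r.
- move=> x; have -> : (fun y : R => F (y%:E * (c^-1)%:E)%E) =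
                      (fun y : R => F y%:E) \o ( *%R^~ c^-1).
    by apply: funext => y /=; rewrite EFinM.
  rewrite -EFinM.
  apply: (@increasing_cvg_at_left_comp R ( *%R^~ c^-1) (fun y => F y%:E)
           (BInfty R true)) => //.
  + by move=> a b _ _ ab; rewrite ltr_pM2r // invr_gt0.
  + exact/cvg_at_left_filter/mulrr_continuous.
- by move=> x x_le0; apply: F_le0; rewrite pmule_lle0.
- by rewrite gt0_mulye.
Qed.

Lemma dle_dscale c G H : dle G H -> dle (dscale c G) (dscale c H).
Proof. by move=> GH; rewrite /dscale; case: eqP => _ x //; exact: GH. Qed.

Lemma dle_dscale_scalar c c' F : inDelta F -> 0 <= c -> c <= c' ->
  dle (dscale c' F) (dscale c F).
Proof.
move=> FP; rewrite le_eqVlt => /predU1P[<- c'_ge0|c_gt0 cc'].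
  by rewrite dscale0; apply/dle_eps0/inDelta_dscale.
have c'_gt0 := lt_le_trans c_gt0 cc'.
case: FP => _ F_mono _ F_le0 _.
rewrite /dscale !gt_eqF // => x; have [x_le0|x_gt0] := leP x 0%E.
  by rewrite !F_le0 // pmule_lle0 // lte_fin invr_gt0.
apply: F_mono; case: x x_gt0 => [r| |] // r_gt0.
  by rewrite -!EFinM lee_fin ler_pM2l -?lte_fin // lef_pV2 ?posrE.
by rewrite !gt0_mulye // lte_fin invr_gt0.
Qed.

End distribution_functions.

Section triangle_function.
Variables (R : realType) (tau : dfun R -> dfun R -> dfun R).
Hypothesis tauP : is_triangle_function tau.
Implicit Types (F G H K : dfun R) (c : R).

Lemma inDelta_tau G H : inDelta G -> inDelta H -> inDelta (tau G H).
Proof. by case: tauP => + _ _ _ _; apply. Qed.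

Lemma tauC G H : inDelta G -> inDelta H -> tau G H = tau H G.
Proof. by case: tauP => _ + _ _ _; apply. Qed.

Lemma tauA G H K : inDelta G -> inDelta H -> inDelta K ->
  tau G (tau H K) = tau (tau G H) K.
Proof. by case: tauP => _ _ + _ _; apply. Qed.

Lemma tau_eps0 G : inDelta G -> tau G (@eps0 R) = G.
Proof. by case: tauP => _ _ _ _; apply. Qed.

Lemma dle_tau G G' H H' : inDelta G -> inDelta G' -> inDelta H -> inDelta H' ->
  dle G G' -> dle H H' -> dle (tau G H) (tau G' H').
Proof.
case: tauP => _ _ _ [tau_monol tau_monor] _ GP G'P HP H'P GG' HH'.
by apply: (dle_trans (tau_monol _ _ _ GP G'P HP GG')); exact: tau_monor.
Qed.

Lemma dle_taul G H : inDelta G -> inDelta H -> dle (tau G H) G.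
Proof.
move=> GP HP; rewrite -[X in dle _ X]tau_eps0 //.
exact: (dle_tau GP GP HP (@inDelta_eps0 R) (dle_refl G) (dle_eps0 HP)).
Qed.

Lemma inDelta_big_tau n (F : 'I_n -> dfun R) : (forall i, inDelta (F i)) ->
  inDelta (\big[tau/@eps0 R]_(i < n) F i).
Proof.
elim: n F => [|n IH] F FP; first by rewrite big_ord0; exact: inDelta_eps0.
by rewrite big_ord_recl; apply: inDelta_tau => //; exact: IH.
Qed.

Lemma dle_big_tau n (F G : 'I_n -> dfun R) :
  (forall i, inDelta (F i)) -> (forall i, inDelta (G i)) ->
  (forall i, dle (F i) (G i)) ->
  dle (\big[tau/@eps0 R]_(i < n) F i) (\big[tau/@eps0 R]_(i < n) G i).
Proof.
elim: n F G => [|n IH] F G FP GP FG; first by rewrite !big_ord0; exact: dle_refl.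
rewrite !big_ord_recl; apply: dle_tau => //; try exact: inDelta_big_tau.
exact: IH.
Qed.

Lemma big_tau_eps0 n : \big[tau/@eps0 R]_(i < n) @eps0 R = @eps0 R.
Proof.
elim: n => [|n IH]; first by rewrite big_ord0.
by rewrite big_ord_recl IH tau_eps0 //; exact: inDelta_eps0.
Qed.

Lemma big_split_tau n (F G : 'I_n -> dfun R) :
  (forall i, inDelta (F i)) -> (forall i, inDelta (G i)) ->
  \big[tau/@eps0 R]_(i < n) tau (F i) (G i) =
  tau (\big[tau/@eps0 R]_(i < n) F i) (\big[tau/@eps0 R]_(i < n) G i).
Proof.
elim: n F G => [|n IH] F G FP GP.
  by rewrite !big_ord0 tau_eps0 //; exact: inDelta_eps0.
rewrite !big_ord_recl IH //.
set F' := \big[tau/_]_(i < n) _; set G' := \big[tau/_]_(i < n) _.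
have F'P : inDelta F' by exact: inDelta_big_tau.
have G'P : inDelta G' by exact: inDelta_big_tau.
have F0P := FP ord0; have G0P := GP ord0.
rewrite -(tauA F0P G0P (inDelta_tau F'P G'P)) (tauA G0P F'P G'P) (tauC G0P F'P).
by rewrite -(tauA F'P G0P G'P) (tauA F0P F'P (inDelta_tau G0P G'P)).
Qed.

Hypothesis tau_distr : distributive_tf tau.

Lemma dscale_big_tau c n (F : 'I_n -> dfun R) : 0 <= c ->
  (forall i, inDelta (F i)) ->
  dscale c (\big[tau/@eps0 R]_(i < n) F i) =
  \big[tau/@eps0 R]_(i < n) dscale c (F i).
Proof.
move=> c_ge0; elim: n F => [|n IH] F FP; first by rewrite !big_ord0 dscale_eps0.
rewrite !big_ord_recl tau_distr ?IH //; exact: inDelta_big_tau.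
Qed.

End triangle_function.

Lemma bigcup_ord_recl (T : Type) n (F : 'I_n.+1 -> set T) :
  \bigcup_i F i = F ord0 `|` \bigcup_i F (lift ord0 i).
Proof.
apply/seteqP; split=> w /=.
  by case=> i _; have [j ->|->] := unliftP ord0 i; [right; exists j|left].
by case=> [F0w|[j _ Fjw]]; [exists ord0|exists (lift ord0 j)].
Qed.

Section ring_of_sets.
Variables (T : Type) (Sigma : set (set T)).
Hypothesis Sigma_ring : setring Sigma.

Lemma setring_setD A B : Sigma A -> Sigma B -> Sigma (A `\` B).
Proof. by case: Sigma_ring => _ _; apply. Qed.

Lemma setring_setI A B : Sigma A -> Sigma B -> Sigma (A `&` B).
Proof. by move=> SA SB; rewrite -setDD; do 2?apply: setring_setD. Qed.

Lemma setring_bigcup n (F : 'I_n -> set T) : (forall i, Sigma (F i)) ->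
  Sigma (\bigcup_i F i).
Proof.
have [S0 SU _] := Sigma_ring.
by move=> SF; apply: (fin_bigcup_closedP _).1 => // i _; exact: SF.
Qed.

End ring_of_sets.

Section decomposable_measure.
Variables (R : realType) (tau : dfun R -> dfun R -> dfun R).
Variables (Omega : Type) (Sigma : set (set Omega)).
Hypotheses (tauP : is_triangle_function tau) (Sigma_ring : setring Sigma).

Section one_measure.
Variable mu : set Omega -> dfun R.
Hypothesis muP : tau_decomposable tau Sigma mu.

Lemma inDelta_decomposable A : Sigma A -> inDelta (mu A).
Proof. by case: muP => + _ _; apply. Qed.

Lemma decomposable_bigcup n (F : 'I_n -> set Omega) :
  (forall i, Sigma (F i)) -> (forall i j, i != j -> F i `&` F j = set0) ->
  mu (\bigcup_i F i) = \big[tau/@eps0 R]_(i < n) mu (F i).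
Proof.
have [_ mu0 muU] := muP.
elim: n F => [|n IH] F SF F_disj.
  by rewrite big_ord0 -mu0; congr mu; apply/seteqP; split=> w // -[[]].
rewrite bigcup_ord_recl big_ord_recl muU ?IH //.
- by move=> i j ij; apply: F_disj; rewrite (inj_eq lift_inj).
- exact: setring_bigcup.
- rewrite setI_bigcupr; apply: bigcup0 => i _.
  exact/F_disj/neq_lift.
Qed.

Lemma decomposable_partition n (E : 'I_n -> set Omega) B :
  (forall i, Sigma (E i)) -> (forall i j, i != j -> E i `&` E j = set0) ->
  Sigma B ->
  mu B = tau (\big[tau/@eps0 R]_(i < n) mu (B `&` E i))
             (mu (B `\` \bigcup_i E i)).
Proof.
move=> SE E_disj SB; have [_ _ muU] := muP.
have SBE i : Sigma (B `&` E i) by apply: setring_setI.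
rewrite -{1}(setUIDK B (\bigcup_i E i)) muU; first last.
- by apply/seteqP; split=> w // -[[_ ?] [_ ?]].
- by apply: setring_setD => //; exact: setring_bigcup.
- by apply: setring_setI => //; exact: setring_bigcup.
rewrite setI_bigcupr decomposable_bigcup // => i j ij.
by rewrite setIACA setIid E_disj // setI0.
Qed.

End one_measure.

Lemma dle_decomposable_partition (mu nu : set Omega -> dfun R)
    n (E : 'I_n -> set Omega) B :
  tau_decomposable tau Sigma mu -> tau_decomposable tau Sigma nu ->
  (forall i, Sigma (E i)) -> (forall i j, i != j -> E i `&` E j = set0) ->
  Sigma B ->
  (forall i, dle (mu (B `&` E i)) (nu (B `&` E i))) ->
  dle (mu (B `\` \bigcup_i E i)) (nu (B `\` \bigcup_i E i)) ->
  dle (mu B) (nu B).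
Proof.
move=> muP nuP SE E_disj SB le_pieces le_rest.
have SBE i : Sigma (B `&` E i) by apply: setring_setI.
have Srest : Sigma (B `\` \bigcup_i E i).
  by apply: setring_setD => //; exact: setring_bigcup.
rewrite (decomposable_partition muP SE) // (decomposable_partition nuP SE) //.
have mu_pieces i : inDelta (mu (B `&` E i)) by exact: inDelta_decomposable.
have nu_pieces i : inDelta (nu (B `&` E i)) by exact: inDelta_decomposable.
apply: (dle_tau tauP) => //; try exact: inDelta_big_tau.
- exact: inDelta_decomposable.
- exact: inDelta_decomposable.
exact: dle_big_tau.
Qed.

End decomposable_measure.

Section simple_representation.
Variables (R : realType) (Omega : Type) (Sigma : set (set Omega)).
Variables (n : nat) (x : 'I_n -> R) (E : 'I_n -> set Omega) (h : Omega -> R).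
Hypothesis hP : simple_rep Sigma x E h.

Lemma simple_rep_piece k w : E k w -> h w = x k.
Proof.
have [_ _ E_disj ->] := hP; move=> Ekw.
rewrite (bigD1 k) //= big1 ?indicE ?mem_set ?mulr1 ?addr0 // => i ik.
rewrite indicE memNset ?mulr0 // => Eiw.
have : (E i `&` E k) w by split.
by rewrite E_disj.
Qed.

Lemma simple_rep_outside w : ~ (\bigcup_i E i) w -> h w = 0.
Proof.
have [_ _ _ ->] := hP; move=> Ew; rewrite big1 // => i _.
by rewrite indicE memNset ?mulr0 // => Eiw; apply: Ew; exists i.
Qed.

End simple_representation.

Section simple_integral.
Variables (R : realType) (tau : dfun R -> dfun R -> dfun R).
Variables (Omega : Type) (Sigma : set (set Omega)) (gamma : set Omega -> dfun R).
Hypotheses (tauP : is_triangle_function tau) (tau_distr : distributive_tf tau).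
Hypotheses (Sigma_ring : setring Sigma) (gammaP : tau_decomposable tau Sigma gamma).

Lemma simple_integral_decomposable n (x : 'I_n -> R) (E : 'I_n -> set Omega) :
  (forall i, 0 <= x i) -> (forall i, Sigma (E i)) ->
  tau_decomposable tau Sigma (simple_integral tau gamma x E).
Proof.
move=> x_ge0 SE; have [_ gamma0 gammaU] := gammaP.
have SAE A i : Sigma A -> Sigma (A `&` E i) by move=> SA; exact: setring_setI.
have gammaAE A i : Sigma A -> inDelta (dscale (x i) (gamma (A `&` E i))).
  by move=> SA; apply/inDelta_dscale/(inDelta_decomposable gammaP)/SAE.
split.
- by move=> A SA; apply: inDelta_big_tau => // i; exact: gammaAE.
- rewrite /simple_integral (eq_bigr (fun=> @eps0 R)) ?big_tau_eps0 // => i _.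
  by rewrite set0I gamma0 dscale_eps0.
- move=> A B SA SB AB; rewrite /simple_integral -(big_split_tau tauP); first last.
  + by move=> i; exact: gammaAE.
  + by move=> i; exact: gammaAE.
  apply: eq_bigr => i _; have SAi := SAE A i SA; have SBi := SAE B i SB.
  have gammaAi := inDelta_decomposable gammaP SAi.
  have gammaBi := inDelta_decomposable gammaP SBi.
  rewrite setIUl gammaU ?tau_distr //.
  by rewrite setIACA AB set0I.
Qed.

Lemma dle_dscale_gamma c c' B : Sigma B -> 0 <= c -> 0 <= c' ->
  (B !=set0 -> c <= c') -> dle (dscale c' (gamma B)) (dscale c (gamma B)).
Proof.
move=> SB c_ge0 c'_ge0; have [->|/set0P BN0 cc'] := eqVneq B set0.
  by have [_ -> _] := gammaP; rewrite !dscale_eps0 // => _; exact: dle_refl.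
by apply: dle_dscale_scalar => //; [exact: (inDelta_decomposable gammaP)|exact: cc'].
Qed.

Section simple_function.
Variables (n : nat) (x : 'I_n -> R) (E : 'I_n -> set Omega) (h : Omega -> R).
Hypothesis hP : simple_rep Sigma x E h.

Lemma simple_integral_le_dscale c B : Sigma B -> 0 <= c ->
  (forall w, B w -> c <= h w) ->
  dle (simple_integral tau gamma x E B) (dscale c (gamma B)).
Proof.
have [x_ge0 SE E_disj _] := hP; move=> SB.
rewrite le_eqVlt => /predU1P[<- _|c_gt0 c_le_h].
  rewrite dscale0; apply/dle_eps0/(inDelta_decomposable _ SB).
  exact: simple_integral_decomposable.
have SBE i : Sigma (B `&` E i) by exact: setring_setI.
have gammaBE i : inDelta (gamma (B `&` E i)) by exact: (inDelta_decomposable gammaP).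
have B_sub_E : B `\` \bigcup_i E i = set0.
  apply/seteqP; split=> w // [Bw /(simple_rep_outside hP) hw0].
  by have := c_le_h w Bw; rewrite hw0 leNgt c_gt0.
have [_ gamma0 _] := gammaP.
rewrite (decomposable_partition Sigma_ring gammaP SE E_disj SB) B_sub_E gamma0.
have gamma_pieces : inDelta (\big[tau/@eps0 R]_(i < n) gamma (B `&` E i)).
  exact: inDelta_big_tau.
rewrite tau_eps0 // dscale_big_tau //; last exact: ltW.
apply: (dle_big_tau tauP) => i.
- exact: (inDelta_dscale (x_ge0 i)).
- exact: (inDelta_dscale (ltW c_gt0)).
apply: dle_dscale_gamma => //; first exact: ltW.
by case=> w [Bw /(simple_rep_piece hP) <-]; exact: c_le_h.
Qed.

Lemma dscale_le_simple_integral c B : Sigma B -> 0 <= c ->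
  (forall w, B w -> h w <= c) ->
  dle (dscale c (gamma B)) (simple_integral tau gamma x E B).
Proof.
have [x_ge0 SE E_disj _] := hP; move=> SB c_ge0 h_le_c.
have SBE i : Sigma (B `&` E i) by exact: setring_setI.
have gammaBE i : inDelta (gamma (B `&` E i)) by exact: (inDelta_decomposable gammaP).
have gamma_rest : inDelta (gamma (B `\` \bigcup_i E i)).
  apply: (inDelta_decomposable gammaP).
  by apply: setring_setD => //; exact: setring_bigcup.
apply: (@dle_trans _ (dscale c (\big[tau/@eps0 R]_(i < n) gamma (B `&` E i)))).
  apply: dle_dscale; rewrite (decomposable_partition Sigma_ring gammaP SE E_disj SB).
  by apply: dle_taul => //; exact: inDelta_big_tau.
rewrite dscale_big_tau //; apply: (dle_big_tau tauP) => i.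
- exact: inDelta_dscale.
- exact: (inDelta_dscale (x_ge0 i)).
apply: dle_dscale_gamma => //.
by case=> w [Bw /(simple_rep_piece hP) <-]; exact: h_le_c.
Qed.

End simple_function.

Lemma dle_simple_integral nf (xf : 'I_nf -> R) (Ef : 'I_nf -> set Omega)
    (f : Omega -> R) ng (xg : 'I_ng -> R) (Eg : 'I_ng -> set Omega)
    (g : Omega -> R) :
  simple_rep Sigma xf Ef f -> simple_rep Sigma xg Eg g ->
  (forall w, f w <= g w) -> forall A, Sigma A ->
  dle (simple_integral tau gamma xg Eg A) (simple_integral tau gamma xf Ef A).
Proof.
move=> fP gP f_le_g A SA.
have [xf_ge0 SEf Ef_disj _] := fP; have [xg_ge0 SEg _ _] := gP.
apply: (dle_decomposable_partition tauP Sigma_ring _ _ SEf Ef_disj SA).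
- exact: simple_integral_decomposable.
- exact: simple_integral_decomposable.
- move=> i; have SAE : Sigma (A `&` Ef i) by exact: setring_setI.
  apply: (@dle_trans _ (dscale (xf i) (gamma (A `&` Ef i)))).
    apply: (simple_integral_le_dscale gP) => // w [_ /(simple_rep_piece fP) <-].
    exact: f_le_g.
  by apply: (dscale_le_simple_integral fP) => // w [_ /(simple_rep_piece fP) ->].
- have Srest : Sigma (A `\` \bigcup_i Ef i).
    by apply: setring_setD => //; exact: setring_bigcup.
  apply: (@dle_trans _ (@eps0 R)).
    apply/dle_eps0/(inDelta_decomposable _ Srest).
    exact: simple_integral_decomposable.
  rewrite -(dscale0 (gamma (A `\` \bigcup_i Ef i))).
  by apply: (dscale_le_simple_integral fP) => // w [_ /(simple_rep_outside fP) ->].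
Qed.

End simple_integral.

Theorem theorem4p4 (R : realType) (Omega : Type) (w0 : Omega)
  (tau : dfun R -> dfun R -> dfun R)
  (Sigma : set (set Omega)) (gamma : set Omega -> dfun R)
  (f g : Omega -> R)
  (nf : nat) (xf : 'I_nf -> R) (Ef : 'I_nf -> set Omega)
  (ng : nat) (xg : 'I_ng -> R) (Eg : 'I_ng -> set Omega) :
  is_triangle_function tau -> distributive_tf tau ->
  setring Sigma ->
  tau_decomposable tau Sigma gamma ->
  simple_rep Sigma xf Ef f -> simple_rep Sigma xg Eg g ->
  (forall w, f w <= g w) ->
  forall A, Sigma A ->
    dle (simple_integral tau gamma xg Eg A) (simple_integral tau gamma xf Ef A).
Proof.
by move=> tauP tau_distr Sigma_ring gammaP; exact: dle_simple_integral.
Qed.
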